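(* Let $\Sigma$ be a finite alphabet, $m,n$ positive integers with $m\le n$, $u,v\in\Sigma^\star$, and $r\in R_{m,n}(u)\cap R_{m,n}(v)$. Let $i_1,i_2\in[1,|u|]$, $j_1,j_2\in[1,|v|]$ with $\operatorname{ord}(r(u),i_1)\ne\operatorname{ord}(r(v),j_1)$. Then Samson has a winning strategy in the game $\mathrm{FO}^2_{m,n}((u,i_1,i_2),(v,j_1,j_2))$. Moreover, Samson has such a winning strategy whose first move is on $u$ if either $r$ ends with $\triangleright$, $r(u)\le i_1$ and $r(v)\ge j_1$, or $r$ ends with $\triangleleft$, $r(u)\ge i_1$ and $r(v)\le j_1$; and he has such a winning strategy whose first move is on $v$ if either $r$ ends with $\triangleright$, $r(u)\ge i_1$ and $r(v)\le j_1$, or $r$ ends with $\triangleleft$, $r(u)\le i_1$ and $r(v)\ge j_1$.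
   Context: Game $\mathrm{FO}^2_{m,n}((u,i_1,i_2),(v,j_1,j_2))$: pebble pair $x$ starts on $i_1$ in $u$ and $j_1$ in $v$, pair $y$ on $i_2$ in $u$ and $j_2$ in $v$. In each of $n$ rounds Samson picks $z\in\{x,y\}$ and places a $z$-pebble on a position of one of the words; Delilah places the mate on a position of the other word. Samson may change the word he plays on at most $m-1$ times. Samson wins if initially or after some round the map $x^u\mapsto x^v$, $y^u\mapsto y^v$ is not a partial isomorphism (pebbled letters differ or $\operatorname{ord}(x^u,y^u)\ne\operatorname{ord}(x^v,y^v)$); otherwise Delilah wins. Boundary positions: $\triangleright_a(w)=\min\{i:w_i=a\}$, $\triangleleft_a(w)=\max\{i:w_i=a\}$, $\triangleright_a(w,q)=\min\{i\in[q+1,|w|]:w_i=a\}$, $\triangleleft_a(w,q)=\max\{i\in[1,q-1]:w_i=a\}$ (undefined if empty); $\triangleright,\triangleleft$ are directions. An $n$-ranker is a sequence $r=(p_1,\dots,p_n)$ of boundary positions with $r(w)=p_1(w)$ if $n=1$, undefined if $(p_1,\dots,p_{n-1})(w)$ is undefined, else $p_n(w,(p_1,\dots,p_{n-1})(w))$; it ends with the direction of $p_n$. An $(m,n)$-ranker is an $n$-ranker whose directions form exactly $m$ maximal blocks of equal direction; $R_{m,n}(w)$ is the set of $(m,n)$-rankers defined over $w$. $\operatorname{ord}(i,j)\in\{<,=,>\}$ is the order type. *)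

From mathcomp Require Import all_boot.
Set Implicit Arguments. Unset Strict Implicit. Unset Printing Implicit Defensive.

Section Words.
Variable S : finType.

(* letter at 1-based position i of w (None if i is not a position of w) *)
Definition letter (w : seq S) (i : nat) : option S := onth w i.-1.

(* directions: Rgt = |> (rightward, min), Lft = <| (leftward, max) *)
Inductive dir := Rgt | Lft.
Definition dir_eqb (d e : dir) : bool :=
  match d, e with Rgt, Rgt | Lft, Lft => true | _, _ => false end.

Record bpos := BP { blet : S; bdir : dir }.

Definition rgt_from (a : S) (w : seq S) (q : nat) : option nat :=
  ohead [seq i <- iota 1 (size w) | (q < i) && (letter w i == Some a)].
Definition lft_from (a : S) (w : seq S) (q : nat) : option nat :=
  let s := [seq i <- iota 1 (size w) | (i < q) && (letter w i == Some a)] in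
  if s is [::] then None else Some (last 0 s).
Definition rgt (a : S) (w : seq S) : option nat :=
  ohead [seq i <- iota 1 (size w) | letter w i == Some a].
Definition lft (a : S) (w : seq S) : option nat :=
  let s := [seq i <- iota 1 (size w) | letter w i == Some a] in
  if s is [::] then None else Some (last 0 s).

Definition bp_eval (p : bpos) (w : seq S) : option nat :=
  match bdir p with Rgt => rgt (blet p) w | Lft => lft (blet p) w end.
Definition bp_eval_from (p : bpos) (w : seq S) (q : nat) : option nat :=
  match bdir p with Rgt => rgt_from (blet p) w q | Lft => lft_from (blet p) w q end.

Definition rk_eval (r : seq bpos) (w : seq S) : option nat :=
  match r with
  | [::] => None
  | p1 :: rest =>
      foldl (fun acc p => obind (bp_eval_from p w) acc) (bp_eval p1 w) rest
  end.

Definition nblocks (ds : seq dir) : nat :=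
  match ds with
  | [::] => 0
  | d :: ds' => (count id (pairmap (fun x y => ~~ dir_eqb x y) d ds')).+1
  end.

Definition mn_ranker (m n : nat) (r : seq bpos) : Prop :=
  size r = n /\ nblocks (map bdir r) = m.

Definition in_R (m n : nat) (w : seq S) (r : seq bpos) : Prop :=
  mn_ranker m n r /\ rk_eval r w <> None.

Definition ends_with (r : seq bpos) (d : dir) : Prop :=
  last Rgt (map bdir r) = d.

(* configuration: x on i1 (in u) / j1 (in v), y on i2 (in u) / j2 (in v) *)
Record config := Cfg { ci1 : nat; ci2 : nat; cj1 : nat; cj2 : nat }.

Definition pos_ok (w : seq S) (i : nat) : Prop := 1 <= i <= size w.

Definition piso (u v : seq S) (c : config) : Prop :=
  letter u (ci1 c) = letter v (cj1 c) /\
  letter u (ci2 c) = letter v (cj2 c) /\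
  Nat.compare (ci1 c) (ci2 c) = Nat.compare (cj1 c) (cj2 c).

(* place pebble z (true = x, false = y) at position p in u and q in v *)
Definition place (c : config) (z : bool) (p q : nat) : config :=
  if z then Cfg p (ci2 c) q (cj2 c) else Cfg (ci1 c) p (cj1 c) q.

(* Samson's chosen word: true = u, false = v. Position pu is on u, pv on v. *)
Definition move (c : config) (z side : bool) (ps pd : nat) : config :=
  if side then place c z ps pd else place c z pd ps.

Definition switch_ok (s : nat) (last : option bool) (side : bool) : bool :=
  match last with Some b => (b == side) || (0 < s) | None => true end.
Definition switch_next (s : nat) (last : option bool) (side : bool) : nat :=
  match last with Some b => if b == side then s else s.-1 | None => s end.

(* swin u v k s last c : Samson has a winning strategy from configuration c
   with k rounds remaining, at most s further word changes allowed, and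
   [last] the word he played on in the previous round (None before round 1). *)
Fixpoint swin (u v : seq S) (k s : nat) (last : option bool) (c : config)
  : Prop :=
  ~ piso u v c \/
  match k with
  | 0 => False
  | k'.+1 =>
      exists (z side : bool) (ps : nat),
        pos_ok (if side then u else v) ps /\ switch_ok s last side /\
        forall pd, pos_ok (if side then v else u) pd ->
          swin u v k' (switch_next s last side) (Some side) (move c z side ps pd)
  end.

Definition samson_wins (m n : nat) (u : seq S) (i1 i2 : nat)
  (v : seq S) (j1 j2 : nat) : Prop :=
  swin u v n m.-1 None (Cfg i1 i2 j1 j2).

(* If the initial configuration is already not a
   partial isomorphism every strategy wins, in particular one starting on
   that side. *)
Definition samson_wins_first (side : bool) (m n : nat) (u : seq S)
  (i1 i2 : nat) (v : seq S) (j1 j2 : nat) : Prop :=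
  let c := Cfg i1 i2 j1 j2 in
  ~ piso u v c \/
  match n with
  | 0 => False
  | n'.+1 =>
      exists (z : bool) (ps : nat),
        pos_ok (if side then u else v) ps /\
        forall pd, pos_ok (if side then v else u) pd ->
          swin u v n' m.-1 (Some side) (move c z side ps pd)
  end.

End Words.

From Stdlib Require Import Classical PeanoNat.
From mathcomp Require Import all_boot zify.
Set Implicit Arguments. Unset Strict Implicit.

(* Induction on the ranker r = r' p, with p = (a, d).  Say d is |> and
   r(u) <= i1, r(v) >= j1 have different order types.  Samson puts the
   pebble not on i1 onto r(u).  Delilah must answer with an a-position of v
   on the same side of j1, hence strictly before r(v); since r(v) is the
   first a after r'(v), her answer is at or before r'(v), whereas r(u) is
   strictly after r'(u).  So the new pebble separates r' in u and v, and the
   induction hypothesis applies: on the same word (no change) when r' also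
   ends with |>, and afresh, paying one change of word, when r' ends with <|
   and p opens a new block.  Exchanging u and v gives the other cases. *)

Definition dir_le (d : dir) (a b : nat) : bool := if d is Rgt then a <= b else b <= a.
Definition dir_lt (d : dir) (a b : nat) : bool := if d is Rgt then a < b else b < a.
Definition dir_start (d : dir) (n : nat) : nat := if d is Rgt then 0 else n.+1.

Lemma dir_eqbP (d e : dir) : reflect (d = e) (dir_eqb d e).
Proof. by case: d; case: e; constructor. Qed.

Lemma dir_ltNge d a b : dir_lt d a b = ~~ dir_le d b a.
Proof. by case: d; rewrite /= ltnNge. Qed.

Lemma dir_ltW d a b : dir_lt d a b -> dir_le d a b.
Proof. by case: d => /= /ltnW. Qed.

Lemma compare_dir_cases d a b c e : Nat.compare a b <> Nat.compare c e ->
  (dir_le d a b /\ dir_le d e c) \/ (dir_le d c e /\ dir_le d b a).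
Proof.
by case: d => /=; case: (Nat.compare_spec a b); case: (Nat.compare_spec c e) => h1 h2 // _;
  lia.
Qed.

Lemma compare_dir_reply d pu i pd j pv : dir_le d pu i -> dir_le d j pv ->
  Nat.compare pu i = Nat.compare pd j -> Nat.compare pu i <> Nat.compare pv j ->
  dir_lt d pd pv.
Proof.
by case: d => /= h1 h2; case: (Nat.compare_spec pu i); case: (Nat.compare_spec pd j);
  case: (Nat.compare_spec pv j) => // *; lia.
Qed.

Lemma compare_dir_separated d qu pu qv pd : dir_lt d qu pu -> dir_le d pd qv ->
  Nat.compare qu pu <> Nat.compare qv pd.
Proof.
by case: d => /= h1 h2; case: (Nat.compare_spec qu pu); case: (Nat.compare_spec qv pd)
  => // *; lia.
Qed.

Lemma filter_iota_head (P : pred nat) m n p :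
  ohead [seq i <- iota m n | P i] = Some p ->
  [/\ P p, m <= p < m + n & forall k, m <= k < p -> ~~ P k].
Proof.
elim: n m => [|n IH] m //=.
case Pm: (P m) => /=; first by move=> [<-]; split => // [|k]; lia.
move/IH => [Pp Hp Hk]; split => // [|k Hk']; first lia.
have [->|km] := eqVneq k m; first by rewrite Pm.
apply: Hk; lia.
Qed.

Lemma filter_iota_last (P : pred nat) m n x0 :
  [seq i <- iota m n | P i] != [::] ->
  let p := last x0 [seq i <- iota m n | P i] in
  [/\ P p, m <= p < m + n & forall k, p < k < m + n -> ~~ P k].
Proof.
elim: n m x0 => [|n IH] m x0 //=.
case Pm: (P m) => /=; last first.
  by move/(IH m.+1 x0) => [Pp Hp Hk]; split => // [|k Hk']; [lia | apply: Hk; lia].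
have [E|NE] := eqVneq [seq i <- iota m.+1 n | P i] [::].
  rewrite E /= => _; split => // [|k Hk]; first lia.
  apply: (contraFN _ (in_nil k)); rewrite -E mem_filter mem_iota => ->; lia.
move=> _; have [Pp Hp Hk] := IH m.+1 m NE; split => // [|k Hk']; first lia.
apply: Hk; lia.
Qed.

Section Rankers.
Variable S : finType.
Implicit Types (w : seq S) (a : S) (p : bpos S) (r : seq (bpos S)).

Lemma rgt_fromP a w q P : rgt_from a w q = Some P ->
  [/\ q < P, pos_ok w P, letter w P = Some a &
      forall k, q < k < P -> letter w k != Some a].
Proof.
move=> /filter_iota_head [/andP [Hq /eqP Hl] HP Hk].
split => // k /andP [h1 h2]; have := Hk k; rewrite h1 /=; apply; lia.
Qed.

Lemma lft_fromP a w q P : lft_from a w q = Some P ->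
  [/\ P < q, pos_ok w P, letter w P = Some a &
      forall k, P < k < q -> letter w k != Some a].
Proof.
rewrite /lft_from.
case Es: [seq i <- _ | (i < q) && (letter w i == Some a)] => [|y t] // [<-].
have /(filter_iota_last 0) : [seq i <- iota 1 (size w) | (i < q) && (letter w i == Some a)]
  != [::] by rewrite Es.
rewrite Es /= => -[/andP [Hq /eqP Hl] HP Hk].
split => // k /andP [h1 h2]; case: (leqP k (size w)) => hk.
  by have := Hk k; rewrite h2 /=; apply; lia.
by rewrite /letter onth_default //; lia.
Qed.

Lemma bp_eval_fromP p w q P : bp_eval_from p w q = Some P ->
  [/\ dir_lt (bdir p) q P, pos_ok w P, letter w P = Some (blet p) &
      forall k, dir_lt (bdir p) q k -> dir_lt (bdir p) k P -> letter w k != Some (blet p)].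
Proof.
rewrite /bp_eval_from; case: (bdir p) => /=.
  by case/rgt_fromP => h1 h2 h3 Hk; split => // k h4 h5; apply: Hk; apply/andP.
by case/lft_fromP => h1 h2 h3 Hk; split => // k h4 h5; apply: Hk; apply/andP.
Qed.

Lemma bp_eval_from_before p w q P k : bp_eval_from p w q = Some P ->
  letter w k = Some (blet p) -> dir_lt (bdir p) k P -> dir_le (bdir p) k q.
Proof.
case/bp_eval_fromP => _ _ _ Hk Hl HkP; rewrite -[dir_le _ _ _]negbK -dir_ltNge.
by apply/negP => Hqk; move: (Hk k Hqk HkP); rewrite Hl eqxx.
Qed.

Lemma dir_start_lt d w k : pos_ok w k -> dir_lt d (dir_start d (size w)) k.
Proof. by case: d; rewrite /pos_ok /=; lia. Qed.

Lemma bp_eval_start p w : bp_eval p w = bp_eval_from p w (dir_start (bdir p) (size w)).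
Proof.
rewrite /bp_eval /bp_eval_from /rgt /rgt_from /lft /lft_from; case: (bdir p) => /=.
  by congr ohead; apply: eq_in_filter => i; rewrite mem_iota => Hi; have -> : 0 < i by lia.
suff -> : [seq i <- iota 1 (size w) | (i < (size w).+1) && (letter w i == Some (blet p))]
          = [seq i <- iota 1 (size w) | letter w i == Some (blet p)] by [].
by apply: eq_in_filter => i; rewrite mem_iota => Hi; have -> : i < (size w).+1 by lia.
Qed.

Lemma rk_eval_rcons r p w P : rk_eval (rcons r p) w = Some P ->
  exists2 q, bp_eval_from p w q = Some P &
    if r is [::] then q = dir_start (bdir p) (size w) else rk_eval r w = Some q.
Proof.
case: r => [|p1 r] /=; first by rewrite bp_eval_start; exists (dir_start (bdir p) (size w)).
by rewrite foldl_rcons; case: (foldl _ _ r) => [q|] //= H; exists q.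
Qed.

Definition rk_blocks r : nat := nblocks (map (@bdir S) r).

Lemma rk_blocks_gt0 r : r <> [::] -> 0 < rk_blocks r.
Proof. by case: r. Qed.

Lemma count_pairmap_rcons (T : Type) (f : T -> T -> bool) x s y :
  count id (pairmap f x (rcons s y)) = count id (pairmap f x s) + f (last x s) y.
Proof. by elim: s x => [|z s IH] x /=; rewrite ?addn0 ?IH ?addnA. Qed.

Lemma rk_blocks_rcons r p : r <> [::] ->
  rk_blocks (rcons r p) =
  rk_blocks r + ~~ dir_eqb (last Rgt (map (@bdir S) r)) (bdir p).
Proof. by case: r => // p1 r _; rewrite /rk_blocks map_rcons /= count_pairmap_rcons. Qed.

Lemma ends_with_rcons r p d : ends_with (rcons r p) d <-> bdir p = d.
Proof. by rewrite /ends_with map_rcons last_rcons. Qed.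

End Rankers.

Section Game.
Variable S : finType.
Implicit Types (u v : seq S) (c : config).

Definition swap_cfg c : config := Cfg (cj1 c) (cj2 c) (ci1 c) (ci2 c).
Definition pebble_u c (z : bool) : nat := if z then ci1 c else ci2 c.
Definition pebble_v c (z : bool) : nat := if z then cj1 c else cj2 c.

Definition swin_first (side : bool) (k s : nat) u v c : Prop :=
  ~ piso u v c \/
  match k with
  | 0 => False
  | k'.+1 =>
      exists (z : bool) (ps : nat),
        pos_ok (if side then u else v) ps /\
        forall pd, pos_ok (if side then v else u) pd ->
          swin u v k' s (Some side) (move c z side ps pd)
  end.

Lemma swap_cfgK : involutive swap_cfg.
Proof. by case. Qed.

Lemma pebble_u_swap c z : pebble_u (swap_cfg c) z = pebble_v c z.
Proof. by case: z. Qed.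

Lemma pebble_v_swap c z : pebble_v (swap_cfg c) z = pebble_u c z.
Proof. by case: z. Qed.

Lemma piso_swap u v c : piso v u (swap_cfg c) -> piso u v c.
Proof. by case: c => i1 i2 j1 j2; rewrite /piso /= => -[-> [-> ->]]. Qed.

Lemma move_swap c z side ps pd :
  move (swap_cfg c) z (~~ side) ps pd = swap_cfg (move c z side ps pd).
Proof. by case: c z side => i1 i2 j1 j2 [] []. Qed.

Lemma pos_ok_swap u v (side : bool) p :
  pos_ok (if side then u else v) p -> pos_ok (if ~~ side then v else u) p.
Proof. by case: side. Qed.

Lemma swin_swap u v k : forall s last c,
  swin u v k s last c -> swin v u k s (omap negb last) (swap_cfg c).
Proof.
elim: k => [|k IH] s last c /=.
  by case=> // H; left => /piso_swap.
case=> [H|[z [side [ps [Hps [Hok Hall]]]]]]; first by left => /piso_swap.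
right; exists z, (~~ side), ps; split; first exact: pos_ok_swap.
have -> : switch_next s (omap negb last) (~~ side) = switch_next s last side.
  by clear Hps Hok Hall; case: last => [[]|] //; case: side.
split; first by clear Hps Hall; move: Hok; case: last => [[]|] //; case: side.
move=> pd Hpd; rewrite move_swap; apply: (IH _ (Some side)); apply: Hall.
by move: Hpd; rewrite -{2}[side]negbK; apply: pos_ok_swap.
Qed.

Lemma swin_first_swap u v side k s c :
  swin_first side k s u v c -> swin_first (~~ side) k s v u (swap_cfg c).
Proof.
case=> [H|]; first by left => /piso_swap.
case: k => // k [z [ps [Hps Hall]]]; right; exists z, ps; split; first exact: pos_ok_swap.
move=> pd Hpd; rewrite move_swap; apply: (swin_swap (last := Some side)); apply: Hall.
by move: Hpd; rewrite -{2}[side]negbK; apply: pos_ok_swap.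
Qed.

Lemma swin_unless_piso u v k s last c :
  (piso u v c -> swin u v k s last c) -> swin u v k s last c.
Proof. by move=> H; case: (classic (piso u v c)) => [/H //|Hn]; case: k {H}; left. Qed.

Lemma switch_ok_mono s s' last side :
  s <= s' -> switch_ok s last side -> switch_ok s' last side.
Proof. by case: last => [b|] //= Hs /orP [->|Hs0] //; rewrite (leq_trans Hs0 Hs) orbT. Qed.

Lemma switch_next_mono s s' last side :
  s <= s' -> switch_next s last side <= switch_next s' last side.
Proof. by case: last => [b|] //=; case: (b == side) => //; lia. Qed.

Lemma swin_budget_mono u v k : forall s s' last c,
  s <= s' -> swin u v k s last c -> swin u v k s' last c.
Proof.
elim: k => [|k IH] s s' last c Hs //=.
case=> [H|[z [side [ps [Hps [Hok Hall]]]]]]; first by left.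
right; exists z, side, ps; split; last split; first by [].
  exact: switch_ok_mono Hok.
by move=> pd Hpd; apply: IH (Hall pd Hpd); apply: switch_next_mono.
Qed.

Lemma swin_none_some u v k s b c :
  swin u v k s None c -> swin u v k s.+1 (Some b) c.
Proof.
case: k => [|k] //=.
case=> [H|[z [side [ps [Hps [_ Hall]]]]]]; first by left.
right; exists z, side, ps; split => //; split; first by rewrite orbT.
by move=> pd Hpd; apply: swin_budget_mono (Hall pd Hpd); case: (b == side).
Qed.

Lemma swin_first_some u v side k s c :
  swin_first side k s u v c -> swin u v k s (Some side) c.
Proof.
case=> [H|]; first by case: k; left.
by case: k => // k [z [ps [Hps Hall]]]; right; exists z, side, ps; rewrite /= eqxx.
Qed.

Lemma swin_first_none u v side k s c :
  swin_first side k s u v c -> swin u v k s None c.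
Proof.
case=> [H|]; first by case: k; left.
by case: k => // k [z [ps [Hps Hall]]]; right; exists z, side, ps.
Qed.

Lemma piso_move u v c z ps pd :
  piso u v (move c (~~ z) true ps pd) ->
  letter u ps = letter v pd /\
  Nat.compare ps (pebble_u c z) = Nat.compare pd (pebble_v c z).
Proof.
case: z; rewrite /piso /= => -[h1 [h2 h3]]; split => //.
by rewrite Nat.compare_antisym h3 -Nat.compare_antisym.
Qed.

Lemma pebble_u_move c z ps pd : pebble_u (move c z true ps pd) z = ps.
Proof. by case: z. Qed.

Lemma pebble_v_move c z ps pd : pebble_v (move c z true ps pd) z = pd.
Proof. by case: z. Qed.

End Game.

Section Strategy.
Variable S : finType.
Implicit Types (u v : seq S) (r : seq (bpos S)) (c : config).

(* The induction statement: pebble z of c lies between r(u) and r(v) in the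
   sense that makes u the word to start on. *)
Definition ranker_wins_u r : Prop := forall u v pu pv c z d,
  rk_eval r u = Some pu -> rk_eval r v = Some pv -> ends_with r d ->
  Nat.compare pu (pebble_u c z) <> Nat.compare pv (pebble_v c z) ->
  dir_le d pu (pebble_u c z) -> dir_le d (pebble_v c z) pv ->
  swin_first true (size r) (rk_blocks r).-1 u v c.

Section FromRankerWinsU.
Variable r : seq (bpos S).
Hypothesis Hr : ranker_wins_u r.

Lemma ranker_wins_v u v pu pv c z d :
  rk_eval r u = Some pu -> rk_eval r v = Some pv -> ends_with r d ->
  Nat.compare pu (pebble_u c z) <> Nat.compare pv (pebble_v c z) ->
  dir_le d (pebble_u c z) pu -> dir_le d pv (pebble_v c z) ->
  swin_first false (size r) (rk_blocks r).-1 u v c.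
Proof.
move=> Hu Hv Hd Hne H1 H2; rewrite -[c]swap_cfgK.
apply: (swin_first_swap (side := true)).
by apply: (Hr (z := z) Hv Hu Hd); rewrite ?pebble_u_swap ?pebble_v_swap // => /esym.
Qed.

Lemma ranker_wins u v pu pv c z :
  rk_eval r u = Some pu -> rk_eval r v = Some pv ->
  Nat.compare pu (pebble_u c z) <> Nat.compare pv (pebble_v c z) ->
  swin u v (size r) (rk_blocks r).-1 None c.
Proof.
move=> Hu Hv Hne; have Hd : ends_with r (last Rgt (map (@bdir S) r)) by [].
have [[H1 H2]|[H1 H2]] := compare_dir_cases (last Rgt (map (@bdir S) r)) Hne.
  by apply: (swin_first_none (side := true)); apply: (Hr (z := z) Hu Hv Hd).
by apply: (swin_first_none (side := false)); apply: (ranker_wins_v (z := z) Hu Hv Hd).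
Qed.

End FromRankerWinsU.

Lemma ranker_wins_continue r d u v qu qv c z :
  ranker_wins_u r -> rk_eval r u = Some qu -> rk_eval r v = Some qv ->
  dir_lt d qu (pebble_u c z) -> dir_le d (pebble_v c z) qv ->
  swin u v (size r)
    (rk_blocks r + ~~ dir_eqb (last Rgt (map (@bdir S) r)) d).-1 (Some true) c.
Proof.
move=> Hr Hu Hv Hlt Hle; have Hne := compare_dir_separated Hlt Hle.
case: (dir_eqbP (last Rgt (map (@bdir S) r)) d) => [Hd|_] /=.
  rewrite addn0; apply: swin_first_some.
  by apply: (Hr u v qu qv c z d Hu Hv Hd Hne) => //; apply: dir_ltW.
have rne : r <> [::] by move=> Er; rewrite Er in Hu.
rewrite addn1 -(prednK (rk_blocks_gt0 rne)); apply: swin_none_some.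
exact: (ranker_wins (z := z) Hr Hu Hv Hne).
Qed.

Lemma ranker_wins_u_rcons r p :
  (r <> [::] -> ranker_wins_u r) -> ranker_wins_u (rcons r p).
Proof.
move=> IH u v pu pv c z d Hu Hv /ends_with_rcons <- Hne Hpu Hpv.
have [qu Hnu Hqu] := rk_eval_rcons Hu.
have [qv Hnv Hqv] := rk_eval_rcons Hv.
have [Hqu_pu Hpu_pos Hpu_let _] := bp_eval_fromP Hnu.
rewrite size_rcons; right; exists (~~ z), pu; split => // pd Hpd.
apply: swin_unless_piso => /piso_move [Hl Hcmp].
have Hpd_pv := compare_dir_reply Hpu Hpv Hcmp Hne.
have Hpd_qv : dir_le (bdir p) pd qv.
  by apply: (bp_eval_from_before Hnv) => //; rewrite -Hl.
case: r IH Hqu Hqv {Hu Hv} => [|p1 r] IH Hqu Hqv.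
  by move: (dir_start_lt (bdir p) Hpd); rewrite -Hqv dir_ltNge Hpd_qv.
rewrite rk_blocks_rcons //; apply: (ranker_wins_continue (z := ~~ z) (IH _) Hqu Hqv) => //.
  by rewrite pebble_u_move.
by rewrite pebble_v_move.
Qed.

Lemma ranker_wins_u_nonnil r : r <> [::] -> ranker_wins_u r.
Proof. by elim/last_ind: r => [|r p IH] // _; apply: ranker_wins_u_rcons. Qed.

End Strategy.

Unset Implicit Arguments. Set Strict Implicit.

Theorem lemma4p2 (S : finType) (m n : nat) (u v : seq S) (r : seq (bpos S))
  (i1 i2 j1 j2 : nat) (pu pv : nat) :
  0 < m -> m <= n ->
  in_R m n u r -> in_R m n v r ->
  rk_eval r u = Some pu -> rk_eval r v = Some pv ->
  pos_ok u i1 -> pos_ok u i2 -> pos_ok v j1 -> pos_ok v j2 ->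
  Nat.compare pu i1 <> Nat.compare pv j1 ->
  samson_wins m n u i1 i2 v j1 j2 /\
  ((ends_with r Rgt /\ pu <= i1 /\ pv >= j1) \/
   (ends_with r Lft /\ pu >= i1 /\ pv <= j1) ->
     samson_wins_first true m n u i1 i2 v j1 j2) /\
  ((ends_with r Rgt /\ pu >= i1 /\ pv <= j1) \/
   (ends_with r Lft /\ pu <= i1 /\ pv >= j1) ->
     samson_wins_first false m n u i1 i2 v j1 j2).
Proof.
move=> _ _ [[<- <-] _] _ Hu Hv _ _ _ _ Hne.
have Hr : ranker_wins_u r by apply: ranker_wins_u_nonnil => Er; rewrite Er in Hu.
set c := Cfg i1 i2 j1 j2.
split; last split.
- exact: (ranker_wins (c := c) (z := true) Hr Hu Hv Hne).
- case=> -[Hd [H1 H2]]; exact: (Hr u v pu pv c true _ Hu Hv Hd Hne H1 H2).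
- case=> -[Hd [H1 H2]]; exact: (ranker_wins_v (c := c) (z := true) Hr Hu Hv Hd Hne H1 H2).
Qed.
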